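(* Let $C>0$, and let $Q_1,\dots,Q_m,\widehat Q_1,\dots,\widehat Q_m$ be probability distributions on $\mathbb{R}^d$ all supported in $\{x:\|x\|_2\le C\}$. Let $\pi,\widehat\pi$ be probability vectors on $[m]$ and set $Q=\sum_i\pi_iQ_i$, $\widehat Q=\sum_i\widehat\pi_i\widehat Q_i$. Suppose $\mathrm{TV}(\widehat\pi,\pi)\le\alpha$ and $\mathcal W_2(\widehat Q_i,Q_i)\le\epsilon$ for all $i\in[m]$. Then $$\mathcal W_2(\widehat Q,Q)\le\epsilon+2C\sqrt\alpha.$$
   Context: $\mathrm{TV}(\widehat\pi,\pi)=\frac12\sum_i|\widehat\pi_i-\pi_i|$; $\mathcal W_2$ is the Wasserstein-2 distance with Euclidean cost. *)

From HB Require Import structures.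
From mathcomp Require Import all_boot all_order all_algebra.
From mathcomp Require Import all_classical all_reals all_analysis.
Set Implicit Arguments. Unset Strict Implicit. Unset Printing Implicit Defensive.
Import Order.TTheory GRing.Theory Num.Theory.
Local Open Scope classical_set_scope.
Local Open Scope ring_scope.

(* R^d is modelled as d.-tuple R with the product (= Borel) sigma-algebra
   provided by MathComp-Analysis (measure_tuple_display). *)

Section defs.
Context {R : realType} {d : nat}.

Definition sqdist (x y : d.-tuple R) : R :=
  \sum_(i < d) (tnth x i - tnth y i) ^+ 2.

Definition eucl_norm (x : d.-tuple R) : R :=
  Num.sqrt (\sum_(i < d) (tnth x i) ^+ 2).

Definition couplings (P Q : probability (d.-tuple R) R)
  : set (probability (d.-tuple R * d.-tuple R)%type R) :=
  [set g | (forall A, measurable A -> g (A `*` setT) = P A) /\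
           (forall B, measurable B -> g (setT `*` B) = Q B)].

Definition W2 (P Q : probability (d.-tuple R) R) : \bar R :=
  let c := ereal_inf [set (\int[g]_z (sqdist z.1 z.2)%:E)%E
                     | g in couplings P Q] in
  match c with
  | r%:E => (Num.sqrt r)%:E
  | _ => c
  end.

End defs.

Definition prob_vec {R : realType} {m : nat} (p : 'I_m -> R) : Prop :=
  (forall i, 0 <= p i) /\ \sum_(i < m) p i = 1.

Definition TV {R : realType} {m : nat} (p q : 'I_m -> R) : R :=
  2^-1 * \sum_(i < m) `|p i - q i|.

(* Couple the two index distributions maximally: with weight min(pih_i, pi_i) the
   index is shared and the components are joined by a near-optimal coupling of
   Qh_i and Q_i, costing at most eps^2; the remaining mass TV(pih, pi) <= alpha is
   spread over independent pairs (Qh_i x Q_j), whose cost is at most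
   (2C)^2 = 4C^2 since both supports lie in the ball of radius C.  The resulting
   mixture couples Qh with Q at cost at most eps^2 + 4 C^2 alpha
   <= (eps + 2 C sqrt alpha)^2. *)

From HB Require Import structures.
From mathcomp Require Import all_boot all_order all_algebra.
From mathcomp Require Import all_classical all_reals all_analysis.
From mathcomp Require Import measurable_realfun lra.
Import Order.TTheory GRing.Theory Num.Theory.
Local Open Scope classical_set_scope.
Local Open Scope ring_scope.

Set Implicit Arguments. Unset Strict Implicit. Unset Printing Implicit Defensive.

Section mixture.
Local Open Scope ereal_scope.
Context d (T : measurableType d) (R : realType) (I : finType).
Variables (P : I -> probability T R) (w : I -> R).
Hypotheses (w_ge0 : forall i, (0 <= w i)%R) (w_sum1 : (\sum_i w i)%R = 1%R).

Let scaled : seq {measure set T -> \bar R} :=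
  [seq (mscale (NngNum (w_ge0 i)) (P i) : {measure set T -> \bar R}) | i <- enum I].

Let mzero' : {measure set T -> \bar R} := mzero.

Local Notation mixture_measure := (msum (nth mzero' scaled) (size scaled)).

Let mixture_measureE A : mixture_measure A = \sum_i (w i)%:E * P i A.
Proof.
rewrite /msum -(big_mkord xpredT (fun k => nth mzero' scaled k A)).
by rewrite -(big_nth mzero' xpredT (fun m : {measure set T -> \bar R} => m A)) big_map big_enum.
Qed.

Let mixture_measure_setT : mixture_measure setT = 1.
Proof.
rewrite mixture_measureE (eq_bigr (fun i => (w i)%:E)); last first.
  by move=> i _; rewrite probability_setT mule1.
by rewrite sumEFin w_sum1.
Qed.

Definition mixture : probability T R := HB.pack_for (probability T R) mixture_measure
  (Measure_isProbability.Build _ _ _ mixture_measure mixture_measure_setT).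

Lemma mixtureE A : mixture A = \sum_i (w i)%:E * P i A.
Proof. exact: mixture_measureE. Qed.

Lemma ge0_integral_mixture (D : set T) (f : T -> \bar R) : measurable D ->
  (forall x, D x -> 0 <= f x) -> measurable_fun D f ->
  \int[mixture]_(x in D) f x = \sum_i (w i)%:E * \int[P i]_(x in D) f x.
Proof.
move=> mD f0 mf.
have -> : \int[mixture]_(x in D) f x = \int[mixture_measure]_(x in D) f x by [].
rewrite ge0_integral_measure_sum // -(big_mkord xpredT (fun k => \int[nth mzero' scaled k]_(x in D) f x)).
rewrite -(big_nth mzero' xpredT (fun m : {measure set T -> \bar R} => \int[m]_(x in D) f x)).
by rewrite big_map big_enum; apply: eq_bigr => i _; rewrite ge0_integral_mscale.
Qed.

End mixture.

Section maximal_coupling.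
Context (R : realFieldType) (I : finType) (p q : I -> R).

Let a i := Order.min (p i) (q i).
Let u i := p i - a i.
Let v i := q i - a i.
Let beta := \sum_i u i.

(* When [p] and [q] have equal mass, [beta = 0] forces [u = v = 0], so the junk
   value [x / 0 = 0] is harmless. *)
Definition maximal_coupling i j : R := (if i == j then a i else 0) + u i * v j / beta.

Hypotheses (p_ge0 : forall i, 0 <= p i) (q_ge0 : forall i, 0 <= q i)
  (sum_pq : \sum_i p i = \sum_i q i).

Let excess_ge0 i : 0 <= u i /\ 0 <= v i.
Proof. by rewrite /u /v /a subr_ge0 ge_min lexx subr_ge0 ge_min lexx orbT. Qed.

Let excess_mul i : u i * v i = 0.
Proof.
by rewrite /u /v /a; case: leP => _; rewrite subrr ?mul0r ?mulr0.
Qed.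

Let normB_excess i : `|p i - q i| = u i + v i.
Proof.
rewrite /u /v /a; case: leP => h; rewrite subrr ?add0r ?addr0.
  by rewrite ler0_norm ?subr_le0 // opprB.
by rewrite gtr0_norm ?subr_gt0.
Qed.

Let sum_v : \sum_i v i = beta.
Proof. by rewrite /beta /u /v !sumrB sum_pq. Qed.

Let mul_beta_divK (x : I -> R) i : (forall j, 0 <= x j) -> \sum_j x j = beta ->
  x i * beta / beta = x i.
Proof.
move=> x_ge0 x_sum; have [beta0|beta_neq0] := eqVneq beta 0; last by rewrite mulfK.
rewrite beta0 mulr0 mul0r; apply/esym/(psumr_eq0P (P := xpredT)) => //.
by rewrite x_sum beta0.
Qed.

Lemma maximal_coupling_ge0 i j : 0 <= maximal_coupling i j.
Proof.
have [[u_ge0 _] [_ v_ge0]] := (excess_ge0 i, excess_ge0 j).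
have a_ge0 : 0 <= a i by rewrite /a le_min p_ge0 q_ge0.
have beta_ge0 : 0 <= beta by apply: sumr_ge0 => k _; case: (excess_ge0 k).
by apply: addr_ge0; [case: ifP | apply/divr_ge0/beta_ge0/mulr_ge0].
Qed.

Let u_mul_beta_divK i : u i * beta / beta = u i.
Proof. by apply: mul_beta_divK => // j; case: (excess_ge0 j). Qed.

Let v_mul_beta_divK j : v j * beta / beta = v j.
Proof. by apply: mul_beta_divK sum_v => i; case: (excess_ge0 i). Qed.

Lemma maximal_coupling_fst i : \sum_j maximal_coupling i j = p i.
Proof.
rewrite big_split /= -[X in _ + X]mulr_suml -mulr_sumr sum_v u_mul_beta_divK.
rewrite -big_mkcond (big_pred1 i) => [|j]; last by rewrite /= eq_sym.
by rewrite /u addrC subrK.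
Qed.

Lemma maximal_coupling_snd j : \sum_i maximal_coupling i j = q j.
Proof.
rewrite big_split /= -[X in _ + X]mulr_suml -mulr_suml -/beta [beta * _]mulrC.
rewrite v_mul_beta_divK -big_mkcond big_pred1_eq.
by rewrite /v /a minC addrC subrK.
Qed.

Lemma maximal_coupling_offdiag :
  \sum_(k | k.1 != k.2) maximal_coupling k.1 k.2 = 2^-1 * \sum_i `|p i - q i|.
Proof.
rewrite (eq_bigr (fun k => u k.1 * v k.2 / beta)); last first.
  by move=> k /negbTE k12; rewrite /maximal_coupling k12 add0r.
have -> : \sum_(k | k.1 != k.2) u k.1 * v k.2 / beta = \sum_k u k.1 * v k.2 / beta.
  rewrite [RHS](bigID (fun k => k.1 == k.2)) /= [X in _ = X + _]big1 ?add0r //.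
  by move=> -[i j] /= /eqP <-; rewrite excess_mul mul0r.
rewrite -(pair_bigA _ (fun i j => u i * v j / beta)) /=.
rewrite (eq_bigr (fun i => u i * beta / beta)) => [|i _]; last first.
  by rewrite -mulr_suml -mulr_sumr sum_v.
rewrite -!mulr_suml -/beta (eq_bigr _ (fun i _ => normB_excess i)) big_split /= sum_v -/beta.
have [->|beta_neq0] := eqVneq beta 0; first by rewrite !mul0r addr0 mulr0.
by rewrite mulfK //; lra.
Qed.

End maximal_coupling.

Lemma sum_diag_offdiag_le (R : realFieldType) (I : finType) (w : I -> I -> R) (x y alpha : R) :
  (forall i j, 0 <= w i j) -> \sum_k w k.1 k.2 = 1 -> 0 <= x -> 0 <= y ->
  \sum_(k | k.1 != k.2) w k.1 k.2 <= alpha ->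
  \sum_k w k.1 k.2 * (if k.1 == k.2 then x else y) <= x + y * alpha.
Proof.
move=> w_ge0 w_sum1 x_ge0 y_ge0 offdiag_le.
rewrite (bigID (fun k => k.1 == k.2)) /=.
rewrite (eq_bigr (fun k => w k.1 k.2 * x)) => [|k ->] //.
rewrite [X in _ + X](eq_bigr (fun k => w k.1 k.2 * y)) => [|k /negbTE ->] //.
rewrite -!mulr_suml lerD //; last by rewrite mulrC ler_wpM2l.
rewrite ler_piMl // -w_sum1 [leRHS](bigID (fun k => k.1 == k.2)) /=.
by rewrite lerDl sumr_ge0.
Qed.

Lemma ereal_inf_leP (R : realType) (S : set (\bar R)) (x : R) :
  (ereal_inf S <= x%:E)%E <->
  (forall e, 0 < e -> exists2 y, S y & (y <= (x + e)%:E)%E).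
Proof.
split=> [Sx e e0 | approx].
  have /ereal_inf_lt[y Sy /ltW] : (ereal_inf S < (x + e)%:E)%E.
    by apply: le_lt_trans Sx _; rewrite lte_fin ltrDl.
  by exists y.
by apply/lee_addgt0Pr => e /approx; rewrite -EFinD; exact: ge_ereal_inf.
Qed.

Section euclidean.
Context (R : realType) (d : nat).
Local Notation T := (d.-tuple R).
Implicit Types (x y : T) (P Q : probability T R) (g : probability (T * T)%type R).

Lemma sqdist_ge0 x y : 0 <= sqdist x y.
Proof. by apply: sumr_ge0 => i _; exact: sqr_ge0. Qed.

Lemma measurable_sqdist : measurable_fun setT (fun z : (T * T)%type => sqdist z.1 z.2).
Proof.
apply: measurable_sum => i; apply/measurable_funX/measurable_funB.
- exact: (measurableT_comp (measurable_tnth i) measurable_fst).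
- exact: (measurableT_comp (measurable_tnth i) measurable_snd).
Qed.

Lemma measurable_eucl_norm : measurable_fun setT (@eucl_norm R d).
Proof.
apply: (measurableT_comp (continuous_measurable_fun (@sqrt_continuous R))).
by apply: measurable_sum => i; apply: measurable_funX; exact: measurable_tnth.
Qed.

Lemma measurable_eucl_norm_gt (C : R) : measurable [set x : T | C < eucl_norm x].
Proof.
rewrite -preimage_itvoy -[X in measurable X]setTI.
by apply: measurable_eucl_norm => //; exact: measurable_itv.
Qed.

Lemma sqr_eucl_norm_le (C : R) x : eucl_norm x <= C -> \sum_i tnth x i ^+ 2 <= C ^+ 2.
Proof.
rewrite /eucl_norm; set s := \sum_i _ => sC.
have s_ge0 : 0 <= s by apply: sumr_ge0 => i _; exact: sqr_ge0.
rewrite -(sqr_sqrtr s_ge0); have := sqrtr_ge0 s; nra.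
Qed.

Lemma sqdist_le (C : R) x y : eucl_norm x <= C -> eucl_norm y <= C ->
  sqdist x y <= 4 * C ^+ 2.
Proof.
move=> /sqr_eucl_norm_le xC /sqr_eucl_norm_le yC.
apply: le_trans (_ : 2 * \sum_i tnth x i ^+ 2 + 2 * \sum_i tnth y i ^+ 2 <= _); last by lra.
rewrite !mulr_sumr -big_split /=; apply: ler_sum => i _.
have := sqr_ge0 (tnth x i + tnth y i); rewrite sqrrB sqrrD; lra.
Qed.

Definition transport_cost g : \bar R := (\int[g]_z (sqdist z.1 z.2)%:E)%E.

Lemma transport_cost_ge0 g : (0 <= transport_cost g)%E.
Proof. by apply: integral_ge0 => z _; rewrite lee_fin sqdist_ge0. Qed.

Let costs P Q := [set transport_cost g | g in couplings P Q].

Lemma W2_ge0 P Q : (0 <= W2 P Q)%E.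
Proof.
have : (0 <= ereal_inf (costs P Q))%E.
  by apply: le_ereal_inf_tmp => _ [g _ <-]; exact: transport_cost_ge0.
by rewrite /W2 -/(costs P Q); case: ereal_inf => // c _; rewrite lee_fin sqrtr_ge0.
Qed.

Lemma W2_leP P Q (r : R) : 0 <= r ->
  (W2 P Q <= r%:E)%E <-> (forall e, 0 < e ->
    exists2 g, couplings P Q g & (transport_cost g <= (r ^+ 2 + e)%:E)%E).
Proof.
move=> r_ge0; have costs_ge0 : (0 <= ereal_inf (costs P Q))%E.
  by apply: le_ereal_inf_tmp => _ [g _ <-]; exact: transport_cost_ge0.
have -> : (W2 P Q <= r%:E)%E = (ereal_inf (costs P Q) <= (r ^+ 2)%:E)%E.
  move: costs_ge0; rewrite /W2 -/(costs P Q).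
  case: ereal_inf => [c c_ge0| |] //; rewrite !lee_fin.
  by rewrite -(ler_sqrt _ (sqr_ge0 r)) sqrtr_sqr ger0_norm.
rewrite ereal_inf_leP; split=> approx e /approx.
  by move=> [_ [g Pg <-] cost_le]; exists g.
by move=> [g Pg cost_le]; exists (transport_cost g) => //; exists g.
Qed.

Lemma product_couplings P Q : couplings P Q (P \x Q)%E.
Proof.
split=> A mA.
- apply: eq_trans (product_measure1E P Q mA measurableT) _.
  by rewrite -[RHS]mule1; congr (_ * _)%E; exact: probability_setT.
- apply: eq_trans (product_measure1E P Q measurableT mA) _.
  by rewrite -[RHS]mul1e; congr (_ * _)%E; exact: probability_setT.
Qed.

Lemma transport_cost_le_ball (C : R) P Q g :
  P [set x | C < eucl_norm x] = 0%E -> Q [set x | C < eucl_norm x] = 0%E ->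
  couplings P Q g -> (transport_cost g <= (4 * C ^+ 2)%:E)%E.
Proof.
move=> PC QC [gP gQ]; have mB := measurable_eucl_norm_gt C.
have -> : (4 * C ^+ 2)%:E = (\int[g]_z (cst (4 * C ^+ 2)%:E) z)%E.
  by rewrite integral_cst // -[LHS]mule1; congr (_ * _)%E; exact/esym/probability_setT.
apply: ae_ge0_le_integral => //.
- by move=> z _; rewrite lee_fin sqdist_ge0.
- by apply/measurable_EFinP; exact: measurable_sqdist.
- by move=> z _; rewrite lee_fin mulr_ge0 // sqr_ge0.
exists ([set x | C < eucl_norm x] `*` setT `|` setT `*` [set x | C < eucl_norm x]).
split; first by apply: measurableU; apply: measurableX.
  apply/eqP; rewrite eq_le measure_ge0 andbT.
  apply: le_trans (measureU2 _ _ _) _; try exact: measurableX.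
  by have /= -> := gP _ mB; have /= -> := gQ _ mB; rewrite PC QC adde0.
move=> [x y] /= cost_gt.
have [xC|xC] := ltP C (eucl_norm x); first by left.
have [yC|yC] := ltP C (eucl_norm y); first by right.
by exfalso; apply: cost_gt => _; rewrite lee_fin sqdist_le.
Qed.

Lemma mixture_couplings (I J : finType) (P : I -> probability T R) (Q : J -> probability T R)
    (K : I * J -> probability (T * T)%type R) (w : I * J -> R)
    (w_ge0 : forall k, 0 <= w k) (w_sum1 : \sum_k w k = 1)
    (p : I -> R) (q : J -> R) P' Q' :
  (forall k, couplings (P k.1) (Q k.2) (K k)) ->
  (forall i, \sum_j w (i, j) = p i) -> (forall j, \sum_i w (i, j) = q j) ->
  (forall A, measurable A -> P' A = \sum_i (p i)%:E * P i A)%E ->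
  (forall B, measurable B -> Q' B = \sum_j (q j)%:E * Q j B)%E ->
  couplings P' Q' (mixture K w_ge0 w_sum1).
Proof.
move=> KPQ wp wq P'E Q'E; split=> A mA; rewrite mixtureE.
- rewrite P'E //; transitivity (\sum_i \sum_j (w (i, j))%:E * K (i, j) (A `*` setT))%E.
    by rewrite pair_bigA; apply: eq_bigr => -[i j].
  apply: eq_bigr => i _; rewrite -wp -sumEFin ge0_sume_distrl => [|j _]; last by rewrite lee_fin.
  by apply: eq_bigr => j _; have [/= -> // _] := KPQ (i, j).
- rewrite Q'E //; transitivity (\sum_j \sum_i (w (i, j))%:E * K (i, j) (setT `*` A))%E.
    by rewrite exchange_big pair_bigA; apply: eq_bigr => -[i j].
  apply: eq_bigr => j _; rewrite -wq -sumEFin ge0_sume_distrl => [|i _]; last by rewrite lee_fin.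
  by apply: eq_bigr => i _; have [_ /= -> //] := KPQ (i, j).
Qed.

Lemma transport_cost_mixture_le (I : finType) (K : I -> probability (T * T)%type R)
    (w : I -> R) (w_ge0 : forall k, 0 <= w k) (w_sum1 : \sum_k w k = 1) (c : I -> R) :
  (forall k, transport_cost (K k) <= (c k)%:E)%E ->
  (transport_cost (mixture K w_ge0 w_sum1) <= (\sum_k w k * c k)%:E)%E.
Proof.
move=> Kc; rewrite /transport_cost ge0_integral_mixture //; last 2 first.
- by move=> z _; rewrite lee_fin sqdist_ge0.
- by apply/measurable_EFinP; exact: measurable_sqdist.
by rewrite -sumEFin; apply: lee_sum => k _; rewrite EFinM lee_wpmul2l ?lee_fin ?Kc.
Qed.

End euclidean.

Lemma prob_vec_dim_gt0 (R : realType) m (p : 'I_m -> R) : prob_vec p -> (0 < m)%N.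
Proof. by case: m p => // p [_]; rewrite big_ord0 => /esym/eqP; rewrite oner_eq0. Qed.

Lemma TV_ge0 (R : realType) m (p q : 'I_m -> R) : 0 <= TV p q.
Proof. by rewrite mulr_ge0 ?invr_ge0 ?sumr_ge0. Qed.

Section mixture_of_couplings.
Context (R : realType) (d m : nat) (C : R).
Local Notation T := (d.-tuple R).
Variables (Qs Qhs : 'I_m -> probability T R) (pi pih : 'I_m -> R) (Q Qh : probability T R).
Hypotheses (Qs_supp : forall i, Qs i [set x | C < eucl_norm x] = 0%E)
  (Qhs_supp : forall i, Qhs i [set x | C < eucl_norm x] = 0%E)
  (pi_vec : prob_vec pi) (pih_vec : prob_vec pih)
  (QE : forall A, measurable A -> Q A = (\sum_i (pi i)%:E * Qs i A)%E)
  (QhE : forall A, measurable A -> Qh A = (\sum_i (pih i)%:E * Qhs i A)%E).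
Variables (c : R) (G : 'I_m -> probability (T * T)%type R).
Hypotheses (c_ge0 : 0 <= c) (G_couplings : forall i, couplings (Qhs i) (Qs i) (G i))
  (G_cost : forall i, (transport_cost (G i) <= c%:E)%E).

Lemma exists_mixture_coupling : exists2 g, couplings Qh Q g &
  (transport_cost g <= (c + 4 * C ^+ 2 * TV pih pi)%:E)%E.
Proof.
have [[pi_ge0 pi_sum1] [pih_ge0 pih_sum1]] := (pi_vec, pih_vec).
have same_mass : \sum_i pih i = \sum_i pi i by rewrite pih_sum1 pi_sum1.
pose gamma := maximal_coupling pih pi.
have gamma_ge0 : forall i j, 0 <= gamma i j := maximal_coupling_ge0 pih_ge0 pi_ge0.
have gamma_sum1 : \sum_(k : 'I_m * 'I_m) gamma k.1 k.2 = 1.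
  by rewrite -pair_bigA -[RHS]pih_sum1; apply: eq_bigr => i _; exact: maximal_coupling_fst.
pose K i j := if i == j then G i else (Qhs i \x Qs j : probability _ R)%E.
have K_couplings (k : 'I_m * 'I_m) : couplings (Qhs k.1) (Qs k.2) (K k.1 k.2).
  case: k => i j; rewrite /K /=; have [<-|_] := eqVneq i j; first exact: G_couplings.
  exact: product_couplings.
have K_cost (k : 'I_m * 'I_m) :
    (transport_cost (K k.1 k.2) <= (if k.1 == k.2 then c else 4 * C ^+ 2)%:E)%E.
  case: k => i j; rewrite /K /=; have [_|_] := eqVneq i j; first exact: G_cost.
  exact: transport_cost_le_ball (Qhs_supp _) (Qs_supp _) (product_couplings _ _).
exists (mixture (fun k => K k.1 k.2) (fun k => gamma_ge0 k.1 k.2) gamma_sum1).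
  apply: mixture_couplings K_couplings _ _ QhE QE => [i | j].
  - exact: maximal_coupling_fst.
  - exact: maximal_coupling_snd.
apply: le_trans (transport_cost_mixture_le _ _ K_cost) _; rewrite lee_fin.
apply: sum_diag_offdiag_le gamma_ge0 gamma_sum1 c_ge0 _ _; first by rewrite mulr_ge0 // sqr_ge0.
by rewrite maximal_coupling_offdiag.
Qed.

End mixture_of_couplings.

Theorem lemmaB5 (R : realType) (d m : nat) (C alpha eps : R)
  (Qs Qhs : 'I_m -> probability (d.-tuple R) R)
  (pi pih : 'I_m -> R)
  (Q Qh : probability (d.-tuple R) R) :
  0 < C ->
  (forall i, Qs i [set x | C < eucl_norm x] = 0%E) ->
  (forall i, Qhs i [set x | C < eucl_norm x] = 0%E) ->
  prob_vec pi -> prob_vec pih ->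
  (forall A, measurable A -> Q A = (\sum_(i < m) (pi i)%:E * Qs i A)%E) ->
  (forall A, measurable A -> Qh A = (\sum_(i < m) (pih i)%:E * Qhs i A)%E) ->
  TV pih pi <= alpha ->
  (forall i, (W2 (Qhs i) (Qs i) <= eps%:E)%E) ->
  (W2 Qh Q <= (eps + 2 * C * Num.sqrt alpha)%:E)%E.
Proof.
move=> C_gt0 Qs_supp Qhs_supp pi_vec pih_vec QE QhE TV_le W2_le_eps.
have eps_ge0 : 0 <= eps.
  have i0 : 'I_m := Ordinal (prob_vec_dim_gt0 pi_vec).
  by rewrite -lee_fin (le_trans (W2_ge0 _ _) (W2_le_eps i0)).
have alpha_ge0 : 0 <= alpha := le_trans (TV_ge0 pih pi) TV_le.
apply/W2_leP => [|e e_gt0]; first by rewrite addr_ge0 ?mulr_ge0 ?sqrtr_ge0 // ltW.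
have /choice[G G_opt] : forall i, exists g,
    couplings (Qhs i) (Qs i) g /\ (transport_cost g <= (eps ^+ 2 + e)%:E)%E.
  by move=> i; have [g] := (W2_leP _ _ eps_ge0).1 (W2_le_eps i) e e_gt0; exists g.
have [|g g_couplings g_cost] := exists_mixture_coupling Qs_supp Qhs_supp pi_vec pih_vec QE QhE
  _ (fun i => (G_opt i).1) (fun i => (G_opt i).2).
  by rewrite addr_ge0 ?sqr_ge0 // ltW.
exists g => //; apply: le_trans g_cost _; rewrite lee_fin.
have TV_term : 4 * C ^+ 2 * TV pih pi <= 4 * C ^+ 2 * alpha.
  by rewrite ler_wpM2l // mulr_ge0 // sqr_ge0.
rewrite -[in X in _ <= X](sqr_sqrtr alpha_ge0) in TV_term.
have := mulr_ge0 (mulr_ge0 eps_ge0 (ltW C_gt0)) (sqrtr_ge0 alpha); nra.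
Qed.
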